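(* Let $V$ be a smooth $A[G]$-module and $0<r\le s$ (allowing $s=\infty$). Then the inclusion $V^{U_1(\varpi^r)}\subset V^{U_1(\varpi^s)}$ is $A[X]$-linear, where $X_j$ acts by $U^{(j)}$ on both sides. Moreover, if $V$ is $A$-torsion free, then so is the quotient $V^{U_1(\varpi^s)}/V^{U_1(\varpi^r)}$.
   Context: Let $F/\mathbb{Q}_p$ be finite with ring of integers $\mathcal{O}_F$, uniformizer $\varpi$, residue field $k_F$; let $K/\mathbb{Q}_\ell$ ($\ell\ne p$) be finite with ring of integers $\mathcal{O}$, maximal ideal $\lambda$, residue field $k$; $G=\mathrm{GL}_n(F)$, and assume $\ell\nmid\#\mathrm{GL}_n(k_F)$. $A$ is an $\mathcal{O}$-algebra; smooth $A[G]$-modules are those equal to the union of their invariants under compact open subgroups. For $1\le r<\infty$, the mirahoric subgroup $U_1(\varpi^r)$ consists of $u\in\mathrm{GL}_n(\mathcal{O}_F)$ whose last row is congruent to $(0,\dots,0,1)$ mod $\varpi^r$; $U_1(\varpi^\infty)=P(\mathcal{O}_F)$ is the intersection of all of them, $P$ being the mirabolic subgroup (last row $(0,\dots,0,1)$). For $j=1,\dots,n-1$ let $\alpha_j=\mathrm{diag}(\varpi 1_j,1_{n-j})$ and let $U^{(j)}$ be the double coset operator $[U_1(\varpi^r)\alpha_jU_1(\varpi^r)]$ acting on $V^{U_1(\varpi^r)}$ by $x\mapsto\sum_{\beta}\beta x$, $\beta$ running over $U_1(\varpi^r)\alpha_jU_1(\varpi^r)/U_1(\varpi^r)$. These operators commute,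 so $V^{U_1(\varpi^r)}$ is a module over $A[X]=A[X_1,\dots,X_{n-1}]$ with $X_j\mapsto U^{(j)}$. An $A$-module $M$ is $A$-torsion free if $am=0$ with $a\in A$, $m\in M$ implies $m=0$ or $a$ is a zero-divisor of $A$. *)

From HB Require Import structures.
From mathcomp Require Import all_boot all_order all_algebra.
Set Implicit Arguments. Unset Strict Implicit. Unset Printing Implicit Defensive.
Import Order.TTheory GRing.Theory Num.Theory.
Local Open Scope ring_scope.

(* p-adic fields: a field F with a normalized discrete valuation      *)
(* [v] (v x is meaningful for x <> 0), complete, of characteristic 0, *)
(* whose residue characteristic is the prime p.  Together with the    *)
(* finiteness of the residue field (see [residue_card]) this          *)
(* characterizes the finite extensions of Q_p.                        *)

Section Valued.
Variable (F : fieldType) (v : F -> int).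

Definition integral (x : F) : bool := (x == 0) || (0 <= v x).

Definition congr_mod (r : nat) (x y : F) : bool :=
  (x - y == 0) || (r%:Z <= v (x - y)).

Definition cauchy_seq (u : nat -> F) : Prop :=
  forall N : nat, exists M : nat, forall m k : nat,
    (M <= m)%N -> (M <= k)%N -> congr_mod N (u m) (u k).

Definition converges_to (u : nat -> F) (L : F) : Prop :=
  forall N : nat, exists M : nat, forall m : nat, (M <= m)%N -> congr_mod N (u m) L.

End Valued.

Record padic_valuation (p : nat) (F : fieldType) (v : F -> int) : Prop := {
  pv_prime : prime p;
  pv_mul : forall x y : F, x != 0 -> y != 0 -> v (x * y) = v x + v y;
  pv_add : forall x y : F, x != 0 -> y != 0 -> x + y != 0 ->
             Num.min (v x) (v y) <= v (x + y);
  pv_surj : forall z : int, exists x : F, x != 0 /\ v x = z;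
  pv_char0 : [pchar F] =i pred0;
  pv_residue_char : (p%:R : F) != 0 /\ 0 < v (p%:R);
  pv_complete : forall u : nat -> F, cauchy_seq v u -> exists L, converges_to v u L
}.

(* The residue field O_F / varpi O_F has exactly q elements. *)
Definition residue_card (F : fieldType) (v : F -> int) (q : nat) : Prop :=
  exists s : seq F, [/\ size s = q, all (integral v) s,
    (forall i k, (i < q)%N -> (k < q)%N -> i <> k -> ~~ congr_mod v 1 (nth 0 s i) (nth 0 s k))
  & (forall x, integral v x -> exists2 y, y \in s & congr_mod v 1 x y)].

Definition gl_order (n q : nat) : nat := (\prod_(i < n) (q ^ n - q ^ i))%N.

Section Groups.
Variables (F : fieldType) (v : F -> int) (n : nat).

Definition GLn (g : 'M[F]_n) : bool := g \in unitmx.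

Definition GLnO (g : 'M[F]_n) : bool :=
  [forall i, forall j, integral v (g i j)] && (\det g != 0) && (v (\det g) == 0).

Definition princ_cong (m : nat) (g : 'M[F]_n) : bool :=
  GLnO g && [forall i, forall j, congr_mod v m (g i j) (if i == j then 1 else 0)].

(* Levels 1 <= r <= infinity: [Some r] is r, [None] is infinity. *)
Definition U1 (lvl : option nat) (g : 'M[F]_n) : bool :=
  GLnO g && [forall i : 'I_n, forall j : 'I_n, (i.+1 == n) ==>
    match lvl with
    | Some r => congr_mod v r (g i j) ((j.+1 == n)%:R)
    | None => g i j == (j.+1 == n)%:R
    end].

Definition alpha (w : F) (j : nat) : 'M[F]_n :=
  diag_mx (\row_(i < n) (if (i < j)%N then w else 1)).

Definition in_dcoset (U : pred 'M[F]_n) (a g : 'M[F]_n) : Prop :=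
  exists u1 u2, U u1 /\ U u2 /\ g = u1 *m a *m u2.

(* bs is a (finite, repetition-free) system of representatives of U a U / U *)
Definition dcoset_reps (U : pred 'M[F]_n) (a : 'M[F]_n) (bs : seq 'M[F]_n) : Prop :=
  [/\ forall b, b \in bs -> in_dcoset U a b,
      forall g, in_dcoset U a g -> exists2 b, b \in bs & U (invmx b *m g)
    & forall i k, (i < size bs)%N -> (k < size bs)%N -> i <> k ->
        ~ U (invmx (nth 0 bs i) *m nth 0 bs k)].

End Groups.

Section Reps.
Variables (F : fieldType) (v : F -> int) (n : nat) (A : comPzRingType) (V : lmodType A).
Variable rho : 'M[F]_n -> V -> V.

Definition is_rep : Prop :=
  [/\ forall g, GLn g -> forall (a : A) (x y : V), rho g (a *: x + y) = a *: rho g x + rho g y,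
      forall x, rho 1%:M x = x
    & forall g h, GLn g -> GLn h -> forall x, rho (g *m h) x = rho g (rho h x)].

Definition fixed_by (U : pred 'M[F]_n) (x : V) : Prop := forall g, U g -> rho g x = x.

(* smooth: every vector is fixed by some compact open subgroup; the
   principal congruence subgroups form a basis of such subgroups *)
Definition smooth : Prop := forall x : V, exists m : nat, fixed_by (princ_cong v m) x.

Definition hecke (bs : seq 'M[F]_n) (x : V) : V := \sum_(b <- bs) rho b x.

End Reps.

Definition zero_divisor (A : comPzRingType) (a : A) : Prop := exists b : A, b != 0 /\ a * b = 0.

Definition torsion_free (A : comPzRingType) (V : lmodType A) : Prop :=
  forall (a : A) (x : V), a *: x = 0 -> x = 0 \/ zero_divisor a.

(* A is an O-algebra, O = ring of integers of (K, vK): phi restricted to O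
   is a unital ring homomorphism O -> A *)
Definition O_algebra_map (K : fieldType) (vK : K -> int) (A : comPzRingType) (phi : K -> A) : Prop :=
  [/\ phi 1 = 1,
      forall x y, integral vK x -> integral vK y -> phi (x + y) = phi x + phi y
    & forall x y, integral vK x -> integral vK y -> phi (x * y) = phi x * phi y].

From HB Require Import structures.
From mathcomp Require Import all_boot all_order all_algebra.
From Stdlib Require Import Classical.
Import Order.TTheory GRing.Theory Num.Theory.
Local Open Scope ring_scope.
Set Implicit Arguments. Unset Strict Implicit. Unset Printing Implicit Defensive.

(* Since U_1(w^s) is contained in U_1(w^r), the inclusion of invariants is clear, and
   torsion-freeness of the quotient follows from a (g x - x) = 0 for g in U_1(w^r).
   For the Hecke operators, write u in U_1(w^r) as u = h L, where L is the identity
   matrix with the last row of u and h lies in the mirabolic P(O_F) (its last row is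
   exactly (0, ..., 0, 1)).  Conjugating L by alpha_j gives a matrix of the same shape,
   so U_1(w^r) alpha_j U_1(w^r) = P(O_F) alpha_j U_1(w^r); and the last row of
   alpha_j^-1 m alpha_j equals that of m alpha_j.  Hence b |-> b U_1(w^r) matches the
   representatives at level s with those at level r, and on U_1(w^r)-invariant vectors
   the two Hecke sums agree term by term. *)

Lemma big_uniq_pred1 (T : eqType) (W : nmodType) (s : seq T) (P : pred T)
    (f : T -> W) (y0 : T) :
  uniq s -> y0 \in s -> P y0 -> (forall y, y \in s -> P y -> y = y0) ->
  \sum_(y <- s | P y) f y = f y0.
Proof.
move=> s_uniq y0s Py0 P_y0; rewrite big_mkcond (bigD1_seq y0) //= Py0.
rewrite big1_seq ?addr0 // => y /andP[y_neq ys].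
by case: ifP => // Py; rewrite (P_y0 y ys Py) eqxx in y_neq.
Qed.

Lemma big_rel_bij (T : eqType) (W : nmodType) (R : rel T) (f : T -> W)
    (s1 s2 : seq T) :
  uniq s1 -> uniq s2 ->
  (forall x, x \in s1 -> exists2 y, y \in s2 & R x y) ->
  (forall y, y \in s2 -> exists2 x, x \in s1 & R x y) ->
  (forall x x' y, x \in s1 -> x' \in s1 -> y \in s2 -> R x y -> R x' y -> x = x') ->
  (forall x y y', x \in s1 -> y \in s2 -> y' \in s2 -> R x y -> R x y' -> y = y') ->
  (forall x y, x \in s1 -> y \in s2 -> R x y -> f x = f y) ->
  \sum_(x <- s1) f x = \sum_(y <- s2) f y.
Proof.
move=> s1_uniq s2_uniq R_right R_left R_injl R_injr f_R.
transitivity (\sum_(x <- s1) \sum_(y <- s2 | R x y) f y).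
  apply: eq_big_seq => x xs1; have [y ys2 Rxy] := R_right x xs1.
  rewrite (big_uniq_pred1 _ s2_uniq ys2 Rxy) ?(f_R x y) // => y' y's2 Rxy'.
  exact: R_injr Rxy' Rxy.
rewrite (exchange_big_dep xpredT) //=; apply: eq_big_seq => y ys2.
have [x xs1 Rxy] := R_left y ys2.
apply: (big_uniq_pred1 (fun => f y) s1_uniq xs1 Rxy) => x' x's1 Rx'y.
exact: R_injl Rx'y Rxy.
Qed.

Lemma invmx_left (R : comUnitRingType) n (A B : 'M[R]_n) :
  B *m A = 1%:M -> invmx A = B.
Proof.
move=> BA1; have [_ Au] := mulmx1_unit BA1.
by rewrite -[invmx A]mul1mx -BA1 -mulmxA mulmxV // mulmx1.
Qed.

Lemma invmxM (R : comUnitRingType) n (A B : 'M[R]_n) :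
  A \in unitmx -> B \in unitmx -> invmx (A *m B) = invmx B *m invmx A.
Proof.
move=> Au Bu; apply: invmx_left.
by rewrite -mulmxA (mulmxA (invmx A)) mulVmx // mul1mx mulVmx.
Qed.

Section MatrixGroups.
Variables (F : fieldType) (n : nat).

Record mx_group (U : pred 'M[F]_n) : Prop := MxGroup {
  mx_group_unit : forall g, U g -> g \in unitmx;
  mx_group1 : U 1%:M;
  mx_groupM : forall g h, U g -> U h -> U (g *m h);
  mx_groupV : forall g, U g -> U (invmx g) }.

Variables (U : pred 'M[F]_n) (a : 'M[F]_n).
Hypotheses (U_group : mx_group U) (a_unit : a \in unitmx).

Lemma in_dcoset_unit g : in_dcoset U a g -> g \in unitmx.
Proof.
case=> u1 [u2 [U1u1 [U1u2 ->]]].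
by rewrite !unitmx_mul a_unit !(mx_group_unit U_group).
Qed.

Lemma mx_group_lcosetC g h : g \in unitmx -> h \in unitmx ->
  U (invmx g *m h) -> U (invmx h *m g).
Proof.
move=> gu hu /(mx_groupV U_group).
by rewrite invmxM ?unitmx_inv // invmxK.
Qed.

Lemma mx_group_lcoset_trans g h k : h \in unitmx ->
  U (invmx g *m h) -> U (invmx h *m k) -> U (invmx g *m k).
Proof.
move=> hu Ugh Uhk; have := mx_groupM U_group Ugh Uhk.
by rewrite mulmxA (mulmxK hu).
Qed.

Variable bs : seq 'M[F]_n.
Hypothesis bs_reps : dcoset_reps U a bs.

Lemma dcoset_reps_unit b : b \in bs -> b \in unitmx.
Proof. by case: bs_reps => bs_dc _ _ /bs_dc; apply: in_dcoset_unit. Qed.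

Lemma dcoset_reps_eq b b' : b \in bs -> b' \in bs -> U (invmx b *m b') -> b = b'.
Proof.
case: bs_reps => _ _ bs_distinct bbs b'bs Ubb'.
have [//|b_neq] := eqVneq b b'; case: (bs_distinct (index b bs) (index b' bs)).
- by rewrite index_mem.
- by rewrite index_mem.
- by move/(congr1 (nth 0 bs)); rewrite !nth_index //; apply/eqP.
- by rewrite !nth_index.
Qed.

Lemma dcoset_reps_uniq : uniq bs.
Proof.
case: (bs_reps) => _ _ bs_distinct; apply/(uniqP 0) => i k ibs kbs bs_ik.
apply/eqP/negPn/negP => /eqP i_neq; apply: (bs_distinct i k ibs kbs i_neq).
by rewrite bs_ik mulVmx ?(mx_group1 U_group) // dcoset_reps_unit ?mem_nth.
Qed.

End MatrixGroups.

(* [U_factor] says U a U = U' a U and [U'_conj] says U' :&: a U a^-1 = U' :&: a U' a^-1;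
   together they make b U' |-> b U a bijection U' a U' / U' -> U a U / U. *)
Section HeckeComparison.
Variables (F : fieldType) (n : nat) (U U' : pred 'M[F]_n) (a : 'M[F]_n).
Hypotheses (U_group : mx_group U) (U'_group : mx_group U') (a_unit : a \in unitmx).
Hypothesis U'_sub : forall g, U' g -> U g.
Hypothesis U_factor : forall u, U u -> exists h N, [/\ U' h, U N & u *m a = h *m a *m N].
Hypothesis U'_conj : forall m, U' m -> U (invmx a *m m *m a) -> U' (invmx a *m m *m a).

Variables (bs bs' : seq 'M[F]_n).
Hypotheses (bs_reps : dcoset_reps U a bs) (bs'_reps : dcoset_reps U' a bs').

Lemma dcoset_reps_matchl b : b \in bs' -> exists2 c, c \in bs & U (invmx c *m b).
Proof.
case: bs'_reps => bs'_dc _ _ /bs'_dc [u1 [u2 [U'u1 [U'u2 ->]]]].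
case: bs_reps => _ bs_cover _; apply: bs_cover.
by exists u1, u2; rewrite !U'_sub.
Qed.

Lemma dcoset_reps_matchr c : c \in bs -> exists2 b, b \in bs' & U (invmx c *m b).
Proof.
move=> cbs; have cu := dcoset_reps_unit U_group a_unit bs_reps cbs.
case: bs_reps => bs_dc _ _; have [u1 [u2 [Uu1 [Uu2 c_eq]]]] := bs_dc c cbs.
have [h [N [U'h UN u1a_eq]]] := U_factor Uu1.
have g_dc : in_dcoset U' a (h *m a).
  by exists h, 1%:M; rewrite mulmx1 (mx_group1 U'_group).
case: bs'_reps => _ bs'_cover _; have [b bbs' U'bg] := bs'_cover _ g_dc.
have bu := dcoset_reps_unit U'_group a_unit bs'_reps bbs'.
exists b => //; apply: (mx_group_lcosetC U_group bu cu).
have -> : invmx b *m c = invmx b *m (h *m a) *m (N *m u2).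
  by rewrite c_eq u1a_eq !mulmxA.
by apply: (mx_groupM U_group); [apply: U'_sub | apply: (mx_groupM U_group)].
Qed.

Lemma dcoset_reps_match_injl c c' b : c \in bs -> c' \in bs -> b \in bs' ->
  U (invmx c *m b) -> U (invmx c' *m b) -> c = c'.
Proof.
move=> cbs c'bs bbs' Ucb Uc'b; apply: (dcoset_reps_eq bs_reps) => //.
have bu := dcoset_reps_unit U'_group a_unit bs'_reps bbs'.
have c'u := dcoset_reps_unit U_group a_unit bs_reps c'bs.
apply: (mx_group_lcoset_trans U_group bu Ucb).
by apply: (mx_group_lcosetC U_group c'u bu).
Qed.

Lemma dcoset_reps_match_injr c b b' : c \in bs -> b \in bs' -> b' \in bs' ->
  U (invmx c *m b) -> U (invmx c *m b') -> b = b'.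
Proof.
move=> cbs bbs' b'bs' Ucb Ucb'.
apply: (dcoset_reps_eq bs'_reps) => //.
have cu := dcoset_reps_unit U_group a_unit bs_reps cbs.
have bu := dcoset_reps_unit U'_group a_unit bs'_reps bbs'.
have Ubc : U (invmx b *m c) by apply: (mx_group_lcosetC U_group cu bu).
have Ubb' : U (invmx b *m b') by apply: (mx_group_lcoset_trans U_group cu Ubc).
case: bs'_reps => bs'_dc _ _.
have [u1 [u2 [U'u1 [U'u2 b_eq]]]] := bs'_dc b bbs'.
have [u1' [u2' [U'u1' [U'u2' b'_eq]]]] := bs'_dc b' b'bs'.
have u1u := mx_group_unit U'_group U'u1.
have u2u := mx_group_unit U'_group U'u2.
have u2'u := mx_group_unit U'_group U'u2'.
pose m := invmx u1 *m u1'; pose M := invmx a *m m *m a.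
have bb'_eq : invmx b *m b' = invmx u2 *m M *m u2'.
  rewrite b_eq b'_eq !invmxM ?unitmx_mul ?u1u ?a_unit //.
  by rewrite /M /m !mulmxA.
have UM : U M.
  have -> : M = u2 *m (invmx b *m b') *m invmx u2'.
    by rewrite bb'_eq /M /m !mulmxA (mulmxV u2u) mul1mx (mulmxK u2'u).
  apply: (mx_groupM U_group); first apply: (mx_groupM U_group) => //.
    by apply: U'_sub.
  by apply: (mx_groupV U_group); apply: U'_sub.
have U'm : U' m by apply: (mx_groupM U'_group) => //; apply: (mx_groupV U'_group).
rewrite bb'_eq; apply: (mx_groupM U'_group) => //.
by apply: (mx_groupM U'_group); [apply: (mx_groupV U'_group) | apply: U'_conj].
Qed.

Lemma hecke_subgroup_eq (A : comPzRingType) (V : lmodType A)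
    (rho : 'M[F]_n -> V -> V) (x : V) :
  (forall g h, GLn g -> GLn h -> forall y, rho (g *m h) y = rho g (rho h y)) ->
  fixed_by rho U x -> hecke rho bs x = hecke rho bs' x.
Proof.
move=> rhoM x_fixed; apply: (big_rel_bij (R := fun c b => U (invmx c *m b))).
- exact: (dcoset_reps_uniq U_group a_unit bs_reps).
- exact: (dcoset_reps_uniq U'_group a_unit bs'_reps).
- exact: dcoset_reps_matchr.
- exact: dcoset_reps_matchl.
- exact: dcoset_reps_match_injl.
- exact: dcoset_reps_match_injr.
move=> c b cbs _ Ucb; have cu := dcoset_reps_unit U_group a_unit bs_reps cbs.
rewrite -(mulKVmx cu b) rhoM ?(x_fixed _ Ucb) //; exact: (mx_group_unit U_group Ucb).
Qed.

End HeckeComparison.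

Definition level_le (l l' : option nat) : bool :=
  match l, l' with
  | _, None => true
  | None, Some _ => false
  | Some r, Some s => (r <= s)%N
  end.

Lemma level_le_none l : level_le l None.
Proof. by case: l. Qed.

Section Valuation.
Variables (p : nat) (F : fieldType) (v : F -> int).
Hypothesis v_padic : padic_valuation p v.

Lemma valuation1 : v 1 = 0.
Proof.
have := pv_mul v_padic (oner_neq0 F) (oner_neq0 F).
by rewrite mulr1 => /esym/(canRL (addrK _)); rewrite subrr.
Qed.

Lemma valuationN1 : v (-1) = 0.
Proof.
have N1_neq0 : (-1 : F) != 0 by rewrite oppr_eq0 oner_neq0.
have := pv_mul v_padic N1_neq0 N1_neq0; rewrite mulrNN mulr1 valuation1 => /eqP.
by rewrite eq_sym -mulr2n -mulr_natr mulf_eq0 pnatr_eq0 orbF => /eqP.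
Qed.

Lemma valuationN x : v (- x) = v x.
Proof.
have [->|x_neq0] := eqVneq x 0; first by rewrite oppr0.
have N1_neq0 : (-1 : F) != 0 by rewrite oppr_eq0 oner_neq0.
by rewrite -mulN1r (pv_mul v_padic N1_neq0 x_neq0) valuationN1 add0r.
Qed.

Lemma valuationV x : x != 0 -> v x^-1 = - v x.
Proof.
move=> x_neq0; have := pv_mul v_padic x_neq0 (invr_neq0 x_neq0).
by rewrite mulfV // valuation1 => /esym/eqP; rewrite addrC addr_eq0 => /eqP.
Qed.

(* Levels as in [U1]: [Some r] gives the ideal varpi^r O_F, [None] (infinite level)
   the zero ideal. *)
Definition in_ideal (lvl : option nat) (z : F) : bool :=
  if lvl is Some r then (z == 0) || (r%:Z <= v z) else z == 0.

Lemma in_ideal0 lvl : in_ideal lvl 0.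
Proof. by case: lvl => [r|] /=; rewrite eqxx. Qed.

Lemma in_idealD lvl x y : in_ideal lvl x -> in_ideal lvl y -> in_ideal lvl (x + y).
Proof.
case: lvl => [r|] /=; last by move=> /eqP-> /eqP->; rewrite addr0.
have [->|x_neq0] := eqVneq x 0; first by rewrite add0r.
have [->|y_neq0] := eqVneq y 0; first by rewrite addr0 => /= vx _; rewrite vx orbT.
have [->|xy_neq0] := eqVneq (x + y) 0; first by [].
move=> /= vx vy; apply: le_trans (pv_add v_padic x_neq0 y_neq0 xy_neq0).
by rewrite le_min vx vy.
Qed.

Lemma in_idealN lvl x : in_ideal lvl x -> in_ideal lvl (- x).
Proof. by case: lvl => [r|] /=; rewrite oppr_eq0 ?valuationN. Qed.

Lemma in_idealB lvl x y : in_ideal lvl x -> in_ideal lvl y -> in_ideal lvl (x - y).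
Proof. by move=> Ix Iy; apply: in_idealD Ix (in_idealN Iy). Qed.

Lemma in_idealMl lvl x y : integral v x -> in_ideal lvl y -> in_ideal lvl (x * y).
Proof.
case: lvl => [r|] /=; last by move=> _ /eqP->; rewrite mulr0.
have [->|x_neq0] := eqVneq x 0; first by rewrite mul0r eqxx.
have [->|y_neq0] := eqVneq y 0; first by rewrite mulr0 eqxx.
rewrite /integral /= mulf_eq0 (negPf x_neq0) (negPf y_neq0) (pv_mul v_padic x_neq0 y_neq0).
by move=> vx vy; rewrite -[r%:Z]add0r lerD.
Qed.

Lemma in_idealMr lvl x y : in_ideal lvl x -> integral v y -> in_ideal lvl (x * y).
Proof. by rewrite mulrC => Ix Iy; apply: in_idealMl. Qed.

Lemma in_ideal_sum lvl (I : Type) (s : seq I) (P : pred I) (f : I -> F) :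
  (forall i, P i -> in_ideal lvl (f i)) -> in_ideal lvl (\sum_(i <- s | P i) f i).
Proof.
by move=> If; apply: (big_ind (in_ideal lvl)) => //; [apply: in_ideal0 | apply: in_idealD].
Qed.

Lemma in_ideal_le l l' x : level_le l l' -> in_ideal l' x -> in_ideal l x.
Proof.
case: l l' => [r|] [s|] //=; last by move=> _ ->; rewrite ?orTb.
by move=> le_rs /orP[->//|vx]; rewrite (le_trans _ vx) ?orbT ?lez_nat.
Qed.

Lemma integralE x : integral v x = in_ideal (Some 0%N) x.
Proof. by []. Qed.

Lemma integral1 : integral v 1.
Proof. by rewrite /integral valuation1 lexx orbT. Qed.

Lemma integralN x : integral v x -> integral v (- x).
Proof. by rewrite !integralE; apply: in_idealN. Qed.

Lemma integralM x y : integral v x -> integral v y -> integral v (x * y).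
Proof. by rewrite !integralE; apply: in_idealMl. Qed.

Lemma integralX x k : integral v x -> integral v (x ^+ k).
Proof.
by move=> Ix; elim: k => [|k IHk]; rewrite ?expr0 ?integral1 // exprS integralM.
Qed.

Lemma integral_prod (I : Type) (s : seq I) (P : pred I) (f : I -> F) :
  (forall i, P i -> integral v (f i)) -> integral v (\prod_(i <- s | P i) f i).
Proof.
by move=> If; apply: (big_ind (integral v)) => //; [apply: integral1 | apply: integralM].
Qed.

Lemma unit_of_congr1 r x : (0 < r)%N -> in_ideal (Some r) (x - 1) ->
  x != 0 /\ v x = 0.
Proof.
move=> r_gt0 /(in_ideal_le (l := Some 1%N)) x_congr1.
have one_notin : ~~ in_ideal (Some 1%N) 1 by rewrite /= oner_eq0 valuation1.
have x_neq0 : x != 0.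
  apply: contra one_notin => /eqP x0; rewrite -[1]opprK -[- 1]add0r -x0.
  exact/in_idealN/x_congr1.
have x_int : integral v x.
  rewrite -[x](subrK 1); apply: (@in_idealD (Some 0%N) _ _ _ integral1).
  exact: in_ideal_le (x_congr1 r_gt0).
move: x_int; rewrite /integral (negPf x_neq0) /= => vx_ge0.
split=> //; apply/eqP; rewrite eq_le vx_ge0 andbT leNgt.
apply: contra one_notin => vx_gt0.
have -> : 1 = x - (x - 1) by rewrite opprB addrC subrK.
by apply: in_idealB (x_congr1 r_gt0); rewrite /= (negPf x_neq0) -gtz0_ge1.
Qed.

Definition integral_mx m n (M : 'M[F]_(m, n)) : Prop := forall i j, integral v (M i j).

Lemma integral_mxM m n k (M : 'M[F]_(m, n)) (N : 'M[F]_(n, k)) :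
  integral_mx M -> integral_mx N -> integral_mx (M *m N).
Proof.
move=> IM IN i j; rewrite mxE integralE.
by apply: in_ideal_sum => l _; apply: integralM.
Qed.

Lemma integral_det n (M : 'M[F]_n) : integral_mx M -> integral v (\det M).
Proof.
move=> IM; rewrite integralE; apply: in_ideal_sum => s _.
by apply: integralM; [apply/integralX/integralN/integral1 | apply: integral_prod].
Qed.

Lemma integral_invmx n (M : 'M[F]_n) : integral_mx M -> \det M != 0 ->
  v (\det M) = 0 -> integral_mx (invmx M).
Proof.
move=> IM det_neq0 v_det i j.
rewrite /invmx unitmxE unitfE det_neq0 !mxE; apply: integralM.
  by rewrite /integral (valuationV det_neq0) v_det oppr0 lexx orbT.
apply: integralM; first exact/integralX/integralN/integral1.
by apply: integral_det => k l; rewrite !mxE.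
Qed.

Lemma GLnOP n (g : 'M[F]_n) :
  GLnO v g <-> [/\ integral_mx g, \det g != 0 & v (\det g) = 0].
Proof.
split=> [/andP[/andP[/forallP Ig det_neq0] /eqP v_det]|[Ig det_neq0 v_det]].
  by split=> // i j; move/forallP: (Ig i).
by rewrite /GLnO det_neq0 v_det eqxx !andbT; apply/forallP=> i; apply/forallP.
Qed.

Section LastRow.
Variable n : nat.
Implicit Types g h : 'M[F]_n.

Lemma eq_last_row (i k : 'I_n) : i.+1 == n -> (i == k) = (k.+1 == n).
Proof.
move=> /eqP i_last; apply/eqP/eqP => [<-//|k_last]; apply: val_inj.
by apply/eqP; rewrite -eqSS i_last k_last.
Qed.

Definition last_row_in (lvl : option nat) g : Prop :=
  forall i j : 'I_n, i.+1 == n -> in_ideal lvl ((g - 1%:M) i j).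

Lemma U1P lvl g : U1 v lvl g <-> GLnO v g /\ last_row_in lvl g.
Proof.
have entryE (i j : 'I_n) : i.+1 == n -> (g - 1%:M) i j = g i j - (j.+1 == n)%:R.
  by move=> i_last; rewrite !mxE (eq_last_row j i_last).
split=> [/andP[g_GLnO /forallP g_last]|[g_GLnO g_last]].
  split=> // i j i_last; move/forallP/(_ j): (g_last i); rewrite i_last entryE //.
  by case: lvl {g_last} => [r|] //= /eqP->; rewrite subrr eqxx.
rewrite /U1 g_GLnO; apply/forallP=> i; apply/forallP=> j; apply/implyP=> i_last.
move: (g_last i j i_last); rewrite entryE //.
by case: lvl {g_last} => [r|] //=; rewrite subr_eq0.
Qed.

Lemma last_row_in1 lvl : last_row_in lvl 1%:M.
Proof. by move=> i j _; rewrite subrr mxE in_ideal0. Qed.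

Lemma last_row_inM lvl g h : integral_mx h ->
  last_row_in lvl g -> last_row_in lvl h -> last_row_in lvl (g *m h).
Proof.
move=> Ih g_last h_last i j i_last.
have -> : g *m h - 1%:M = (g - 1%:M) *m h + (h - 1%:M).
  by rewrite mulmxBl mul1mx addrA subrK.
rewrite mxE [X in X + _]mxE; apply: in_idealD (h_last _ _ i_last).
by apply: in_ideal_sum => k _; apply: in_idealMr (g_last _ _ i_last) (Ih _ _).
Qed.

Lemma last_row_inV lvl g : g \in unitmx -> integral_mx (invmx g) ->
  last_row_in lvl g -> last_row_in lvl (invmx g).
Proof.
move=> g_unit Ig' g_last i j i_last.
have -> : invmx g - 1%:M = - ((g - 1%:M) *m invmx g).
  by rewrite mulmxBl mulmxV // mul1mx opprB.
rewrite mxE mxE; apply/in_idealN/in_ideal_sum => k _.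
exact: in_idealMr (g_last _ _ i_last) (Ig' _ _).
Qed.

Lemma U1_group lvl : @mx_group F n (U1 v lvl).
Proof.
have GLnO_unit g : GLnO v g -> g \in unitmx.
  by case/GLnOP=> _ det_neq0 _; rewrite unitmxE unitfE.
have GLnO_inv g : GLnO v g -> GLnO v (invmx g).
  move=> /GLnOP[Ig det_neq0 v_det]; apply/GLnOP; split.
  - exact: integral_invmx.
  - by rewrite det_inv invr_eq0.
  - by rewrite det_inv (valuationV det_neq0) v_det oppr0.
split.
- by move=> g /U1P[/GLnO_unit].
- apply/U1P; split; last exact: last_row_in1.
  apply/GLnOP; split; last by rewrite det1 valuation1.
  + by move=> i j; rewrite mxE; case: (i == j); rewrite ?integral1 // /integral eqxx.
  + by rewrite det1 oner_neq0.
- move=> g h /U1P[/GLnOP[Ig dg vg] g_last] /U1P[/GLnOP[Ih dh vh] h_last].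
  apply/U1P; split; last exact: last_row_inM.
  apply/GLnOP; rewrite det_mulmx mulf_neq0 // (pv_mul v_padic dg dh) vg vh addr0.
  by split=> //; apply: integral_mxM.
- move=> g /U1P[g_GLnO g_last]; apply/U1P; split; first exact: GLnO_inv.
  apply: last_row_inV => //; first exact: GLnO_unit.
  by case/GLnOP: (GLnO_inv g g_GLnO).
Qed.

Lemma U1_le l l' g : level_le l l' -> U1 v l' g -> U1 v l g.
Proof.
move=> le_ll' /U1P[g_GLnO g_last]; apply/U1P; split=> // i j i_last.
exact: in_ideal_le le_ll' (g_last i j i_last).
Qed.

Definition lastrow_mx (u : 'M[F]_n) : 'M[F]_n :=
  \matrix_(a, b) if a.+1 == n then u a b else (a == b)%:R.

Lemma lastrow_mx_U1 r u : (0 < r)%N -> integral_mx u -> last_row_in (Some r) u ->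
  U1 v (Some r) (lastrow_mx u).
Proof.
move=> r_gt0 Iu u_last.
have L_last : last_row_in (Some r) (lastrow_mx u).
  by move=> i k i_last; move: (u_last i k i_last); rewrite !mxE i_last.
apply/U1P; split=> //.
have L_trig : is_trig_mx (lastrow_mx u).
  apply/is_trig_mxP=> a b lt_ab.
  rewrite mxE ltn_eqF; last exact: leq_ltn_trans lt_ab (ltn_ord b).
  by case: eqP lt_ab => // ->; rewrite ltnn.
have diag_unit a : lastrow_mx u a a != 0 /\ v (lastrow_mx u a a) = 0.
  rewrite mxE eqxx; case: ifP => a_last; last by rewrite oner_neq0 valuation1.
  by apply: (unit_of_congr1 r_gt0); move: (u_last a a a_last); rewrite !mxE eqxx.
have /andP[det_neq0 /eqP v_det] :
    (\det (lastrow_mx u) != 0) && (v (\det (lastrow_mx u)) == 0).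
  rewrite det_trig //; apply: (big_ind (fun x => (x != 0) && (v x == 0))).
  - by rewrite oner_neq0 valuation1.
  - move=> x y /andP[x_neq0 /eqP vx] /andP[y_neq0 /eqP vy].
    by rewrite mulf_neq0 // (pv_mul v_padic x_neq0 y_neq0) vx vy addr0.
  - by move=> a _; case: (diag_unit a) => -> ->.
apply/GLnOP; split=> // a b; rewrite mxE; case: ifP => _; first exact: Iu.
by case: eqP => _; rewrite ?integral1 // /integral eqxx.
Qed.

Lemma last_row_in_lastrow_mxV u : lastrow_mx u \in unitmx ->
  last_row_in None (u *m invmx (lastrow_mx u)).
Proof.
move=> L_unit i k i_last.
have -> : (u *m invmx (lastrow_mx u) - 1%:M) i k =
          (lastrow_mx u *m invmx (lastrow_mx u) - 1%:M) i k.
  rewrite mxE [RHS]mxE !mxE; congr (_ + _).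
  by apply: eq_bigr => l _; rewrite mxE i_last.
by rewrite mulmxV // subrr mxE in_ideal0.
Qed.

End LastRow.

Section Alpha.
Variables (n : nat) (w : F) (j : nat).
Hypotheses (w_neq0 : w != 0) (w_int : integral v w) (j_lt_n : (j < n)%N).
Local Notation alpha := (alpha n w j).

Lemma invmx_alpha :
  invmx alpha = diag_mx (\row_(i < n) if (i < j)%N then w^-1 else 1).
Proof.
apply: invmx_left; apply/matrixP=> a b; rewrite mul_diag_mx !mxE.
by case: (a == b); case: ifP; rewrite ?mulr0n ?mulr0 ?mulr1n ?mulVf ?mulr1.
Qed.

Lemma alpha_unit : alpha \in unitmx.
Proof.
rewrite unitmxE unitfE det_diag; apply/prodf_neq0 => i _.
by rewrite mxE; case: ifP; rewrite ?oner_neq0.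
Qed.

Lemma last_row_alphaV_mulmx (X : 'M[F]_n) (i k : 'I_n) : i.+1 == n ->
  (invmx alpha *m X) i k = X i k.
Proof.
move=> /eqP i_last; rewrite invmx_alpha mul_diag_mx !mxE ifN ?mul1r //.
by rewrite -leqNgt -ltnS i_last.
Qed.

Lemma last_row_in_alphaV_mulmx lvl (X : 'M[F]_n) :
  last_row_in lvl X -> last_row_in lvl (invmx alpha *m X).
Proof.
move=> X_last i k i_last.
have entryE (Y : 'M[F]_n) : (Y - 1%:M) i k = Y i k - (1%:M : 'M[F]_n) i k.
  by rewrite !mxE.
by rewrite entryE last_row_alphaV_mulmx // -entryE; apply: X_last.
Qed.

Lemma integral_mx_alpha : integral_mx alpha.
Proof.
move=> a b; rewrite !mxE; case: eqP => _; last by rewrite mulr0n /integral eqxx.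
by rewrite mulr1n; case: ifP => _; rewrite ?integral1.
Qed.

Lemma last_row_in_mulmx_alpha lvl (X : 'M[F]_n) :
  last_row_in lvl X -> last_row_in lvl (X *m alpha).
Proof.
move=> X_last i k i_last; move: (X_last i k i_last).
rewrite mul_mx_diag !mxE (eq_last_row k i_last); case: ifP => [k_lt_j|]; last first.
  by rewrite mulr1.
have -> : (k.+1 == n) = false by rewrite ltn_eqF // (leq_ltn_trans k_lt_j).
by rewrite !subr0 => X_ik; apply: in_idealMr.
Qed.

Lemma lastrow_mx_conj_alpha (u : 'M[F]_n) :
  invmx alpha *m lastrow_mx u *m alpha = lastrow_mx (u *m alpha).
Proof.
rewrite -mulmxA; apply: (canLR (mulKmx alpha_unit)).
apply/matrixP=> a b; rewrite !mul_mx_diag mul_diag_mx !mxE.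
case: ifP => a_last.
  have -> : (a < j)%N = false by apply: negbTE; rewrite -leqNgt -ltnS (eqP a_last).
  by rewrite mul1r.
by case: eqP => [<-|_]; rewrite ?mulr0n ?mulr0 ?mul0r // mulr1n mulr1 mul1r.
Qed.

Lemma U1_alpha_factor r s u : (0 < r)%N -> U1 v (Some r) u ->
  exists h N, [/\ U1 v s h, U1 v (Some r) N & u *m alpha = h *m alpha *m N].
Proof.
move=> r_gt0 Uu; have /U1P[/GLnOP[Iu _ _] u_last] := Uu.
have Ur_group := U1_group n (Some r).
have UL := lastrow_mx_U1 r_gt0 Iu u_last.
have L_unit := mx_group_unit Ur_group UL.
exists (u *m invmx (lastrow_mx u)), (lastrow_mx (u *m alpha)); split.
- apply: (U1_le (level_le_none s)); apply/U1P; split.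
    have /U1P[] // : U1 v (Some r) (u *m invmx (lastrow_mx u)).
    by apply: (mx_groupM Ur_group) => //; apply: (mx_groupV Ur_group).
  exact: last_row_in_lastrow_mxV.
- apply: lastrow_mx_U1 => //; last exact: last_row_in_mulmx_alpha.
  exact: integral_mxM integral_mx_alpha.
by rewrite -lastrow_mx_conj_alpha !mulmxA (mulmxK alpha_unit) (mulmxKV L_unit).
Qed.

Lemma U1_alpha_conj l s m : U1 v s m -> U1 v l (invmx alpha *m m *m alpha) ->
  U1 v s (invmx alpha *m m *m alpha).
Proof.
move=> /U1P[_ m_last] /U1P[conj_GLnO _]; apply/U1P; split=> //.
by rewrite -mulmxA; apply/last_row_in_alphaV_mulmx/last_row_in_mulmx_alpha.
Qed.

End Alpha.

End Valuation.

Section Representations.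
Variables (F : fieldType) (n : nat) (A : comPzRingType) (V : lmodType A).
Variable rho : 'M[F]_n -> V -> V.
Hypothesis rho_rep : is_rep rho.

Lemma rep_scale g a x : GLn g -> rho g (a *: x) = a *: rho g x.
Proof.
case: rho_rep => rho_lin _ _ g_unit.
have rho0 : rho g 0 = 0.
  have := rho_lin g g_unit 1 0 0; rewrite scale1r addr0 scale1r.
  by move/esym/(canRL (addrK _)); rewrite subrr.
by rewrite -[a *: x]addr0 rho_lin // rho0 addr0.
Qed.

Lemma fixed_by_of_scale (U : pred 'M[F]_n) a x : (forall g, U g -> GLn g) ->
  torsion_free V -> ~ zero_divisor a -> fixed_by rho U (a *: x) -> fixed_by rho U x.
Proof.
move=> U_GLn V_tf a_reg ax_fixed g Ug; apply/eqP; rewrite -subr_eq0; apply/eqP.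
have : a *: (rho g x - x) = 0 by rewrite scalerBr -rep_scale ?U_GLn // ax_fixed // subrr.
by case/V_tf.
Qed.

End Representations.

Theorem lemma2
  (p : nat) (F : fieldType) (vF : F -> int) (w : F) (q : nat)
  (l : nat) (K : fieldType) (vK : K -> int)
  (n : nat) (A : comPzRingType) (phi : K -> A) (V : lmodType A) (rho : 'M[F]_n -> V -> V)
  (r : nat) (s : option nat) :
  padic_valuation p vF -> w != 0 -> vF w = 1 -> residue_card vF q ->
  padic_valuation l vK -> l <> p ->
  ~~ (l %| gl_order n q)%N ->
  (0 < n)%N ->
  O_algebra_map vK phi ->
  is_rep rho -> smooth vF rho ->
  (0 < r)%N -> (match s with Some s' => (r <= s')%N | None => true end) ->
  (forall x : V, fixed_by rho (U1 vF (Some r)) x -> fixed_by rho (U1 vF s) x)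
  /\
  (forall (j : nat) (bs_r bs_s : seq 'M[F]_n), (1 <= j)%N -> (j < n)%N ->
     dcoset_reps (U1 vF (Some r)) (alpha n w j) bs_r ->
     dcoset_reps (U1 vF s) (alpha n w j) bs_s ->
     forall x : V, fixed_by rho (U1 vF (Some r)) x -> hecke rho bs_r x = hecke rho bs_s x)
  /\
  (torsion_free V ->
     forall (a : A) (x : V), fixed_by rho (U1 vF s) x ->
       fixed_by rho (U1 vF (Some r)) (a *: x) ->
       fixed_by rho (U1 vF (Some r)) x \/ zero_divisor a).
Proof.
move=> vF_padic w_neq0 vw _ _ _ _ _ _ rho_rep _ r_gt0 le_rs.
have w_int : integral vF w by rewrite /integral vw orbT.
have U_sub (g : 'M[F]_n) : U1 vF s g -> U1 vF (Some r) g := U1_le (l := Some r) le_rs.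
have U_group := U1_group vF_padic n.
split; [|split].
- by move=> x x_fixed g /U_sub; apply: x_fixed.
- move=> j bs_r bs_s _ j_lt_n bs_r_reps bs_s_reps x x_fixed.
  case: (rho_rep) => _ _ rhoM.
  have factor := U1_alpha_factor vF_padic w_neq0 w_int j_lt_n s r_gt0.
  have conj := U1_alpha_conj vF_padic w_neq0 w_int j_lt_n (l := Some r) (s := s).
  exact: (hecke_subgroup_eq (U_group _) (U_group _) (alpha_unit n j w_neq0)
    U_sub factor conj bs_r_reps bs_s_reps rhoM x_fixed).
- move=> V_tf a x _ ax_fixed; have [|a_reg] := classic (zero_divisor a); first by right.
  left; apply: (fixed_by_of_scale rho_rep _ V_tf a_reg ax_fixed).
  by move=> g /(mx_group_unit (U_group _)).
Qed.
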